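(* Let $\mathcal F$ be a compact subset of $C(\mathbf X)$ and $\gamma>0$ be such that $$L:=\limsup_{\epsilon\to0}\frac{\mathcal H_\epsilon(\mathcal F)}{(1/\epsilon)^\gamma}\in(0,\infty).$$ There exists a strategy for Predictor such that for every $F\in\mathcal F$ there is $N_0$ (depending on $F$ but not on Reality's moves) such that for all $N\ge N_0$ and all moves of Reality $$\sum_{n=1}^N(y_n-\mu_n)^2\le\sum_{n=1}^N(y_n-F(x_n))^2+CL^{\frac1{\gamma+1}}N^{\frac\gamma{\gamma+1}},$$ where $C$ is a universal constant.
   Context: Protocol: $\mathbf X$ a nonempty topological space; at each round $n$ Reality announces $x_n\in\mathbf X$, Predictor announces $\mu_n\in\mathbb R$, Reality announces $y_n\in[-1,1]$; a strategy for Predictor maps each history $(x_1,y_1,\dots,x_{n-1},y_{n-1},x_n)$ to $\mu_n$. $C(\mathbf X)$: bounded continuous real functions with supremum norm. $\mathcal H_\epsilon(A)$: $\log_2$ of the minimal number of points of $A$ forming an $\epsilon$-net for $A$ in the supremum metric. *)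

From mathcomp Require Import all_boot all_order all_algebra.
From mathcomp Require Import all_classical all_reals all_analysis.
Set Implicit Arguments. Unset Strict Implicit. Unset Printing Implicit Defensive.
Import Order.TTheory GRing.Theory Num.Theory.
Import numFieldNormedType.Exports.
Local Open Scope classical_set_scope.
Local Open Scope ring_scope.

Section Defs.
Context {R : realType} {X : topologicalType}.

(* Membership of F in C(X): bounded continuous real functions. *)
Definition bounded_continuous (f : X -> R) : Prop :=
  continuous f /\ exists M : R, forall x, `|f x| <= M.

Definition sup_close (e : R) (f g : X -> R) : Prop :=
  forall x, `|f x - g x| <= e.

Definition has_net (A : set (X -> R)) (e : R) (n : nat) : Prop :=
  exists g : 'I_n -> (X -> R),
    (forall i, A (g i)) /\ forall f, A f -> exists i, sup_close e f (g i).

(* Minimal number of points of A forming an e-net for A (0 if none exists). *)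
Definition net_number (A : set (X -> R)) (e : R) : nat :=
  match pselect (exists n, has_net A e n) with
  | left h => ex_minn (P := fun n => `[< has_net A e n >])
                 (let: ex_intro n hn := h in ex_intro _ n (asboolT hn))
  | right _ => 0%N
  end.

Definition metric_entropy (A : set (X -> R)) (e : R) : R :=
  ln (net_number A e)%:R / ln 2.

End Defs.

Definition limsup0 {R : realType} (g : R -> R) : \bar R :=
  ereal_inf [set ereal_sup [set (g e)%:E | e in [set e | 0 < e < d]]
            | d in [set d : R | 0 < d]].

(* Predictor strategy: history (x_1,y_1,...,x_{n-1},y_{n-1}) and x_n |-> mu_n. *)
Definition strategy (R : realType) (X : Type) := seq (X * R) -> X -> R.

(* Predictor's move at round n (0-indexed) against Reality's sequences x, y. *)
Definition pred_move {R : realType} {X : Type} (S : strategy R X)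
  (x : nat -> X) (y : nat -> R) (n : nat) : R :=
  S [seq (x i, y i) | i <- iota 0 n] (x n).

From mathcomp Require Import all_boot all_order all_algebra.
From mathcomp Require Import all_classical all_reals all_analysis.
From mathcomp Require Import ring lra.
Import Order.TTheory GRing.Theory Num.Theory.
Import numFieldNormedType.Exports.

Set Implicit Arguments.
Unset Strict Implicit.
Unset Printing Implicit Defensive.

Local Open Scope classical_set_scope.
Local Open Scope ring_scope.

(* Time is cut into epochs of lengths ell_j = 2^(m j), with m chosen so that
   ell_j^(g/(g+1)) grows geometrically with ratio between 2 and 4.  During
   epoch j Predictor runs exponentially weighted averaging, restarted at the
   start of the epoch, over an eps_j-net of F with eps_j = (L/ell_j)^(1/(g+1)),
   the experts' predictions being clipped to [-1, 1].  Exp-concavity of the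
   square loss bounds the regret against the best net point by 32 ln K_j,
   which the limsup hypothesis makes at most 64 L eps_j^-g once eps_j is
   small; replacing F by its net point costs 5 eps_j per round.  Both terms
   are multiples of L^(1/(g+1)) ell_j^(g/(g+1)), and summing the geometric
   series over the epochs gives O(L^(1/(g+1)) N^(g/(g+1))).  The finitely
   many early epochs in which eps_j is not yet small cost a constant, which is
   absorbed for large N. *)

Section WeightedMean.
Variables (R : realType) (K : nat).

Definition wmean (v p : 'I_K -> R) : R := (\sum_i v i * p i) / \sum_i v i.

Lemma wmean_itv (v p : 'I_K -> R) :
  (forall i, 0 <= v i) -> (forall i, -1 <= p i <= 1) -> -1 <= wmean v p <= 1.
Proof.
move=> v_ge0 p_itv; rewrite /wmean.
have [->|Sv_neq0] := eqVneq (\sum_i v i) 0; first by rewrite invr0 mulr0; lra.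
have Sv_gt0 : 0 < \sum_i v i by rewrite lt_def Sv_neq0 sumr_ge0.
rewrite ler_pdivlMr // ler_pdivrMr // !mulNr !mul1r.
have lb : \sum_i v i * -1 <= \sum_i v i * p i.
  by apply: ler_sum => i _; have := p_itv i; have := v_ge0 i; nra.
have ub : \sum_i v i * p i <= \sum_i v i * 1.
  by apply: ler_sum => i _; have := p_itv i; have := v_ge0 i; nra.
by move: lb ub; rewrite -!mulr_suml mulrN1 mulr1 => -> ->.
Qed.

(* Exp-concavity of the square loss on [-1, 1] with rate 1/32: the function
   p |-> expR (- (y - p)^2 / 32) lies below its tangent at mu. *)
Lemma sqloss_exp_tangent (y p mu : R) :
  -1 <= y <= 1 -> -1 <= p <= 1 -> -1 <= mu <= 1 ->
  expR (- (y - p) ^+ 2 / 32) <=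
  expR (- (y - mu) ^+ 2 / 32) * (1 + (y - mu) * (p - mu) / 16).
Proof.
move=> /andP[y1 y2] /andP[p1 p2] /andP[m1 m2].
set b := y - mu; set d := p - mu; set s := b * d / 16.
set t := s - d ^+ 2 / 32.
have -> : - (y - p) ^+ 2 / 32 = - b ^+ 2 / 32 + t by rewrite /t /s /b /d; field.
rewrite expRD ler_pM2l ?expR_gt0 //.
(* expR t <= 1 + s follows from 1 - t <= expR (- t) and (1 - t) (1 + s) >= 1. *)
have bd_ge : -4 <= b * d by rewrite /b /d; nra.
have b2_le : b ^+ 2 <= 4 by rewrite /b; nra.
have d2_le : d ^+ 2 <= 4 by rewrite /d; nra.
have s_gt : 0 < 1 + s by rewrite /s; nra.
have t_lt : 0 < 1 - t by rewrite /t /s; nra.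
have prod_ge1 : 1 <= (1 - t) * (1 + s).
  have -> : (1 - t) * (1 + s) = 1 + d ^+ 2 * (1 + s) / 32 - s ^+ 2 by rewrite /t; field.
  rewrite /s; nra.
have expNt_ge : 1 - t <= expR (- t) by exact: expR_ge1Dx.
have expRt_inv : expR t * expR (- t) = 1 by rewrite -expRD subrr expR0.
have := expR_gt0 t; have := expR_gt0 (- t); nra.
Qed.

Lemma sqloss_exp_wmean (v p : 'I_K -> R) (y : R) :
  (forall i, 0 <= v i) -> (forall i, -1 <= p i <= 1) -> -1 <= y <= 1 ->
  \sum_i v i * expR (- (y - p i) ^+ 2 / 32) <=
  expR (- (y - wmean v p) ^+ 2 / 32) * \sum_i v i.
Proof.
move=> v_ge0 p_itv y_itv.
set mu := wmean v p; have mu_itv : -1 <= mu <= 1 by exact: wmean_itv.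
have [Sv0|Sv_neq0] := eqVneq (\sum_i v i) 0.
  have v0 i : v i = 0.
    apply/eqP; rewrite eq_le v_ge0 andbT -Sv0 (bigD1 i) //= lerDl.
    by rewrite sumr_ge0.
  by rewrite Sv0 mulr0 big1 // => i _; rewrite v0 mul0r.
have Svp : \sum_i v i * p i = mu * \sum_i v i.
  by rewrite /mu /wmean mulrAC -mulrA divff ?mulr1.
apply: (@le_trans _ _ (\sum_i v i *
    (expR (- (y - mu) ^+ 2 / 32) * (1 + (y - mu) * (p i - mu) / 16)))).
  by apply: ler_sum => i _; apply: ler_wpM2l => //; exact: sqloss_exp_tangent.
set E := expR _; set c := (y - mu) / 16.
have -> : \sum_i v i * (E * (1 + (y - mu) * (p i - mu) / 16)) =
    \sum_i (E * v i + (E * c * (v i * p i) - E * c * mu * v i)).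
  by apply: eq_bigr => i _; rewrite /c; ring.
by rewrite big_split sumrB /= -!mulr_sumr Svp mulrA subrr addr0.
Qed.

End WeightedMean.

Section ExponentialWeights.
Variables (R : realType) (K : nat) (p : nat -> 'I_K -> R) (y : nat -> R).

Definition ewa_weight (a n : nat) (i : 'I_K) : R :=
  expR (- (\sum_(a <= s < n) (y s - p s i) ^+ 2) / 32).

Definition ewa (a n : nat) : R := wmean (ewa_weight a n) (p n).

Lemma ewa_weight_ge0 a n i : 0 <= ewa_weight a n i.
Proof. exact/ltW/expR_gt0. Qed.

Hypothesis p_itv : forall s i, -1 <= p s i <= 1.
Hypothesis y_itv : forall s, -1 <= y s <= 1.

Lemma ewa_itv a n : -1 <= ewa a n <= 1.
Proof. exact/wmean_itv/p_itv/ewa_weight_ge0. Qed.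

Lemma ewa_weightS a n i : (a <= n)%N ->
  ewa_weight a n.+1 i = ewa_weight a n i * expR (- (y n - p n i) ^+ 2 / 32).
Proof. by move=> an; rewrite /ewa_weight big_nat_recr //= -expRD opprD mulrDl. Qed.

Lemma ewa_potential a n : (a <= n)%N ->
  \sum_i ewa_weight a n i <=
  K%:R * expR (- (\sum_(a <= s < n) (y s - ewa a s) ^+ 2) / 32).
Proof.
move=> /subnK <-; elim: (n - a)%N => [|k IH].
  rewrite add0n big_geq // oppr0 mul0r expR0 mulr1.
  under eq_bigr do rewrite /ewa_weight big_geq // oppr0 mul0r expR0.
  by rewrite sumr_const card_ord.
have ak : (a <= k + a)%N by rewrite leq_addl.
rewrite addSn.
under eq_bigr do rewrite ewa_weightS //.
apply: le_trans (sqloss_exp_wmean (ewa_weight_ge0 a (k + a)) (p_itv _) (y_itv _)) _.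
rewrite mulrC big_nat_recr //= opprD mulrDl expRD mulrA.
by apply: ler_wpM2r; [exact/ltW/expR_gt0 | exact: IH].
Qed.

Lemma ewa_regret a n i : (a <= n)%N ->
  \sum_(a <= s < n) (y s - ewa a s) ^+ 2 <=
  \sum_(a <= s < n) (y s - p s i) ^+ 2 + 32 * ln (K%:R : R).
Proof.
move=> an; have K_gt0 : (0 < K)%N by apply: leq_ltn_trans (ltn_ord i).
have wi_le : ewa_weight a n i <= \sum_j ewa_weight a n j.
  by rewrite (bigD1 i) //= lerDl sumr_ge0 // => j _; exact: ewa_weight_ge0.
have := le_trans wi_le (ewa_potential an).
rewrite /ewa_weight -ler_ln ?posrE ?mulr_gt0 ?expR_gt0 ?ltr0n //.
by rewrite lnM ?posrE ?expR_gt0 ?ltr0n // !expRK; lra.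
Qed.

End ExponentialWeights.

Lemma eq_ewa {R : realType} {K : nat} (p p' : nat -> 'I_K -> R) (y y' : nat -> R) a n :
  (forall s i, (s <= n)%N -> p s i = p' s i) -> (forall s, (s < n)%N -> y s = y' s) ->
  ewa p y a n = ewa p' y' a n.
Proof.
move=> ep ey.
have ew i : ewa_weight p y a n i = ewa_weight p' y' a n i.
  by rewrite /ewa_weight; under eq_big_nat => s /andP[_ sn] do rewrite ey // ep 1?ltnW //.
by rewrite /ewa /wmean; congr (_ / _); apply: eq_bigr => i _; rewrite ew ?ep.
Qed.

Section Clip.
Variable R : realType.

Definition clip (v : R) : R := if v < -1 then -1 else if 1 < v then 1 else v.

Lemma clip_cases (v : R) :
  [\/ v < -1 /\ clip v = -1, 1 < v /\ clip v = 1 | -1 <= v <= 1 /\ clip v = v].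
Proof.
rewrite /clip; case: ltP => [|v_ge]; first by constructor.
by case: ltP => [|v_le]; constructor => //; rewrite v_ge v_le.
Qed.

Lemma clip_itv (v : R) : -1 <= clip v <= 1.
Proof. by case: (clip_cases v) => -[h ->]; lra. Qed.

Lemma sqloss_clip_le (y f g e : R) :
  -1 <= y <= 1 -> `|f - g| <= e -> e <= 1 ->
  (y - clip g) ^+ 2 <= (y - f) ^+ 2 + 5 * e.
Proof.
move=> /andP[y1 y2] /[dup] fg_le; rewrite ler_norml => /andP[fg1 fg2] e1.
have e0 : 0 <= e by apply: le_trans fg_le.
by case: (clip_cases g) => -[g_itv ->]; case: (clip_cases f) => -[f_itv _]; nra.
Qed.

Lemma sqloss_sub_le4 (y p q : R) :
  -1 <= y <= 1 -> -1 <= p <= 1 -> (y - p) ^+ 2 - (y - q) ^+ 2 <= 4.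
Proof. by move=> /andP[y1 y2] /andP[p1 p2]; have := sqr_ge0 (y - q); nra. Qed.

End Clip.

Section Nets.
Context {R : realType} {X : topologicalType}.
Implicit Types (A : set (X -> R)) (e : R).

Lemma net_number_spec A e :
  (exists n, has_net A e n) -> has_net A e (net_number A e).
Proof.
by move=> ex; rewrite /net_number; case: pselect => // ?; case: ex_minnP => n /asboolP.
Qed.

Lemma has_netW A e e' n : e <= e' -> has_net A e n -> has_net A e' n.
Proof.
move=> ee' [g [gA gnet]]; exists g; split => // f /gnet[i fi].
by exists i => x; apply: le_trans (fi x) ee'.
Qed.

Lemma ln_net_number_le A e : ln (net_number A e)%:R <= metric_entropy A e.
Proof.
have ln2_gt0 : 0 < ln (2 : R) by rewrite -ln1 ltr_ln ?posrE //; lra.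
have ln2_le1 : ln (2 : R) <= 1.
  rewrite -[leRHS](expRK 1) ler_ln ?posrE ?expR_gt0 //.
  by have := expR_ge1Dx (1 : R); lra.
have lnK_ge0 : 0 <= ln (net_number A e)%:R :> R.
  case: (net_number A e) => [|k]; first by rewrite ln0.
  by apply: ln_ge0; rewrite ler1n.
rewrite /metric_entropy ler_pdivlMr //; nra.
Qed.

End Nets.

Section Limsup0.
Variable R : realType.
Implicit Types (g : R -> R) (r d : R).

Lemma limsup0_lt g r :
  (limsup0 g < r%:E)%E -> exists2 d, 0 < d & forall e, 0 < e < d -> g e < r.
Proof.
move=> /ereal_inf_lt[_ [d d_gt0 <-] sup_lt]; exists d => // e e_itv.
by rewrite -lte_fin; apply: le_lt_trans sup_lt; apply: ereal_sup_ubound; exists e.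
Qed.

Lemma limsup0_le g r d :
  0 < d -> (forall e, 0 < e < d -> g e <= r) -> (limsup0 g <= r%:E)%E.
Proof.
move=> d_gt0 g_le; apply: le_trans (ereal_inf_lbound _) _; first by exists d.
by apply: ub_ereal_sup => _ [e e_itv <-]; rewrite lee_fin g_le.
Qed.

End Limsup0.

(* [net_number] is 0 when no finite net exists, so a positive limsup forces
   finite nets at every scale. *)
Lemma has_net_of_limsup0_gt0 {R : realType} {X : topologicalType}
    (F : set (X -> R)) (gamma L : R) :
  limsup0 (fun e => metric_entropy F e * e `^ gamma) = L%:E -> 0 < L ->
  forall e, 0 < e -> exists n, has_net F e n.
Proof.
move=> FL L_gt0 e0 e0_gt0; apply: contrapT => no_net.
have : (L%:E <= 0%:E)%E.
  rewrite -FL; apply: (limsup0_le e0_gt0) => e /andP[_ e_lt].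
  rewrite /metric_entropy /net_number; case: pselect => [[n netn]|_].
    by case: no_net; exists n; apply: has_netW netn; exact: ltW.
  by rewrite ln0 // !mul0r.
by rewrite lee_fin; lra.
Qed.

Section PowerScaling.
Variable R : realType.

Lemma exists_nat_mul_itv (th : R) : 0 < th <= 1 -> exists m : nat, 1 <= m%:R * th <= 2.
Proof.
move=> /andP[th_gt0 th_le1]; set t := Num.truncn th^-1; exists t.+1.
have ub : t%:R * th <= 1 by rewrite -ler_pdivlMr // div1r truncn_le invr_ge0 ltW.
have lb : 1 < t.+1%:R * th by rewrite -ltr_pdivrMr // div1r truncnS_gt.
by rewrite ltW //= -natr1 mulrDl mul1r; lra.
Qed.

Lemma powR_scale_pow2 (m : nat) (th l : R) : 0 <= l -> 1 <= m%:R * th <= 2 ->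
  2 * l `^ th <= (2 ^+ m * l) `^ th <= 4 * l `^ th.
Proof.
move=> l_ge0 /andP[mth1 mth2].
rewrite powRM ?exprn_ge0 // -powR_mulrn // -powRrM.
have two_le : (2 : R) <= 2 `^ (m%:R * th) by rewrite -{1}(@powRr1 _ 2) // ler_powR // ler1n.
have le_four : (2 : R) `^ (m%:R * th) <= 4.
  have -> : (4 : R) = 2 `^ 2%:R by rewrite powR_mulrn // expr2; lra.
  by rewrite ler_powR // ler1n.
by have lth := powR_ge0 l th; apply/andP; split; nra.
Qed.

Lemma sum_doubling_le (a : nat -> R) :
  (forall j, 0 <= a j) -> (forall j, 2 * a j <= a j.+1) ->
  forall J, \sum_(j < J.+1) a j <= 2 * a J.
Proof.
move=> a_ge0 a_double; elim=> [|J IH]; first by rewrite big_ord1; have := a_ge0 0%N; lra.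
by rewrite big_ord_recr /=; have := a_double J; lra.
Qed.

Lemma powR_nat_unbounded (M th : R) : 0 < th ->
  exists N0, forall N : nat, (N0 <= N)%N -> M <= N%:R `^ th.
Proof.
move=> th_gt0; exists (Num.truncn (M `^ th^-1)).+1 => N N_ge.
have [M_le0|M_gt0] := leP M 0; first exact/(le_trans M_le0)/powR_ge0.
have MN : M `^ th^-1 <= N%:R.
  by apply/ltW/(lt_le_trans (truncnS_gt _)); rewrite ler_nat.
apply: le_trans (ge0_ler_powR (ltW th_gt0) _ _ MN); rewrite ?nnegrE ?powR_ge0 //.
by rewrite -powRrM mulVf ?gt_eqF // powRr1 // ltW.
Qed.

Lemma powR_div (x y r : R) : 0 <= x -> 0 <= y -> (x / y) `^ r = x `^ r / y `^ r.
Proof.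
by move=> x_ge0 y_ge0; rewrite powRM ?invr_ge0 // -powR_inv1 // -powRrM mulN1r powRN.
Qed.

Section NetScale.
Variables (L l g : R).
Hypotheses (L_gt0 : 0 < L) (l_gt0 : 0 < l) (g_gt0 : 0 < g).

Let g1_neq0 : g + 1 != 0. Proof. by rewrite gt_eqF // addr_gt0. Qed.

Lemma net_scale_mul :
  (L / l) `^ (1 / (g + 1)) * l = L `^ (1 / (g + 1)) * l `^ (g / (g + 1)).
Proof.
have -> : g / (g + 1) = 1 - 1 / (g + 1) by field.
rewrite powR_div ?ltW // -mulrA powRB ?(lt0r_neq0 l_gt0) ?implybT // powRr1 ?ltW //.
by rewrite [l / _]mulrC.
Qed.

Lemma net_scale_powR :
  (L / l) `^ (1 / (g + 1)) `^ g * (L `^ (1 / (g + 1)) * l `^ (g / (g + 1))) = L.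
Proof.
set ka := 1 / (g + 1); set th := g / (g + 1).
rewrite -powRrM (_ : ka * g = th); last by rewrite /ka /th mul1r mulrC.
rewrite powR_div ?ltW // mulrACA -powRD ?(lt0r_neq0 L_gt0) ?implybT //.
rewrite mulVf ?mulr1 ?gt_eqF ?powR_gt0 // (_ : th + ka = 1) ?powRr1 ?ltW //.
by rewrite /ka /th; field.
Qed.

End NetScale.

Lemma powR_ratio_lt (L k d : R) (l : nat -> nat) : 0 <= L -> 0 < k -> 0 < d ->
  (forall j, j <= l j)%N -> exists j0, forall j, (j0 <= j)%N -> (L / (l j)%:R) `^ k < d.
Proof.
move=> L_ge0 k_gt0 d_gt0 l_ge; exists (Num.truncn (L / d `^ k^-1)).+1 => j j_ge.
have dk_gt0 : 0 < d `^ k^-1 by rewrite powR_gt0.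
have l_gt : L / d `^ k^-1 < (l j)%:R.
  by apply: (lt_le_trans (truncnS_gt _)); rewrite ler_nat (leq_trans j_ge).
have l_gt0 : 0 < (l j)%:R :> R by apply: le_lt_trans l_gt; rewrite divr_ge0 // ltW.
have ratio_lt : L / (l j)%:R < d `^ k^-1 by rewrite ltr_pdivrMr // mulrC -ltr_pdivrMr.
have d_eq : (d `^ k^-1) `^ k = d by rewrite -powRrM mulVf ?lt0r_neq0 // powRr1 ?ltW.
rewrite -d_eq; apply: gt0_ltr_powR => //; rewrite nnegrE.
  exact: divr_ge0 L_ge0 (ltW l_gt0).
exact: powR_ge0.
Qed.

End PowerScaling.

Section Epochs.
Variable ell : nat -> nat.

Definition epoch_start (j : nat) : nat := (\sum_(i < j) ell i)%N.

Lemma epoch_startS j : epoch_start j.+1 = (epoch_start j + ell j)%N.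
Proof. by rewrite /epoch_start big_ord_recr. Qed.

Lemma epoch_start_homo : {homo epoch_start : i j / (i <= j)%N}.
Proof.
move=> i j /subnK <-; elim: (j - i)%N => [|k IH] //.
by rewrite addSn epoch_startS (leq_trans IH) ?leq_addr.
Qed.

Lemma sum_over_epochs (R : realType) (a B : nat -> R) (j0 J N : nat) :
  (forall j, 0 <= B j) ->
  (forall j M, (j0 <= j)%N -> (epoch_start j <= M <= epoch_start j.+1)%N ->
     \sum_(epoch_start j <= n < M) a n <= B j) ->
  (epoch_start J <= N <= epoch_start J.+1)%N -> (epoch_start j0 <= N)%N ->
  \sum_(epoch_start j0 <= n < N) a n <= \sum_(j < J.+1) B j.
Proof.
move=> B_ge0 epoch_le; elim: J N => [|J IH] N /andP[NJ NJ1] j0N.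
  case: j0 epoch_le j0N => [|j0] epoch_le j0N; first by rewrite big_ord1 epoch_le ?NJ.
  by rewrite big_geq ?sumr_ge0 // (leq_trans NJ1) // epoch_start_homo.
have [Jj0|j0J] := ltnP J.+1 j0.
  by rewrite big_geq ?sumr_ge0 // (leq_trans NJ1) // epoch_start_homo.
rewrite (@big_cat_nat _ _ _ (epoch_start J.+1)) ?epoch_start_homo //= big_ord_recr /=.
apply: lerD; first by apply: IH; rewrite ?leqnn ?andbT; apply: epoch_start_homo.
by apply: epoch_le; rewrite ?NJ.
Qed.

Hypothesis ell_gt0 : forall j, (0 < ell j)%N.

Lemma epoch_start_gt n : (n < epoch_start n.+1)%N.
Proof.
elim: n => [|n IH]; first by rewrite epoch_startS /epoch_start big_ord0 add0n ell_gt0.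
by rewrite epoch_startS; have := leq_add IH (ell_gt0 n.+1); rewrite addn1.
Qed.

Definition epoch_of (n : nat) : nat :=
  ex_minn (ex_intro (fun j => n < epoch_start j.+1)%N n (epoch_start_gt n)).

Lemma epoch_ofP n : (epoch_start (epoch_of n) <= n < epoch_start (epoch_of n).+1)%N.
Proof.
rewrite /epoch_of; case: ex_minnP => j n_lt j_min; rewrite n_lt andbT.
case: j n_lt j_min => [|j] _ j_min; first by rewrite /epoch_start big_ord0.
by rewrite leqNgt; apply/negP => /j_min; rewrite ltnn.
Qed.

Lemma epoch_of_eq j n :
  (epoch_start j <= n < epoch_start j.+1)%N -> epoch_of n = j.
Proof.
move=> /andP[jn nj]; have /andP[en ne] := epoch_ofP n.
apply/eqP; rewrite eqn_leq; apply/andP; split; rewrite leqNgt; apply/negP => ij.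
  by have := epoch_start_homo ij; rewrite leqNgt (leq_ltn_trans en nj).
by have := epoch_start_homo ij; rewrite leqNgt (leq_ltn_trans jn ne).
Qed.

End Epochs.

Section EpochStrategy.
Variables (R : realType) (X : Type) (ell : nat -> nat).
Hypothesis ell_gt0 : forall j, (0 < ell j)%N.
Variables (K : nat -> nat) (expert : forall j, 'I_(K j) -> X -> R).
Arguments expert : clear implicits.

Local Notation T := (epoch_start ell).
Local Notation ep := (epoch_of ell_gt0).

(* At round [n = size h] the current point [xn] is the default value of
   [nth _ h n], which is exactly what [ewa] reads at index [n]. *)
Definition epoch_ewa : strategy R X := fun h xn =>
  let z s := nth (xn, 0) h s in
  ewa (fun s i => clip (expert (ep (size h)) i (z s).1)) (fun s => (z s).2)
      (T (ep (size h))) (size h).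

Lemma pred_move_epoch_ewa x y n :
  pred_move epoch_ewa x y n = ewa (fun s i => clip (expert (ep n) i (x s))) y (T (ep n)) n.
Proof.
rewrite /pred_move /epoch_ewa size_map size_iota.
apply: eq_ewa => [s i|s sn]; last by rewrite (nth_map 0%N) ?size_iota // nth_iota.
rewrite leq_eqVlt => /predU1P[->|sn]; first by rewrite nth_default // size_map size_iota.
by rewrite (nth_map 0%N) ?size_iota // nth_iota.
Qed.

Lemma pred_move_epoch_ewa_itv x y n : -1 <= pred_move epoch_ewa x y n <= 1.
Proof. by rewrite pred_move_epoch_ewa; apply: ewa_itv => s i; exact: clip_itv. Qed.

Lemma epoch_ewa_regret x y j N i : (forall n, -1 <= y n <= 1) ->
  (T j <= N <= T j.+1)%N ->
  \sum_(T j <= n < N) (y n - pred_move epoch_ewa x y n) ^+ 2 <=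
  \sum_(T j <= n < N) (y n - clip (expert j i (x n))) ^+ 2 + 32 * ln (K j)%:R.
Proof.
move=> y_itv /andP[jN Nj]; set p := fun s i => clip (expert j i (x s)).
have <- : \sum_(T j <= n < N) (y n - ewa p y (T j) n) ^+ 2 =
    \sum_(T j <= n < N) (y n - pred_move epoch_ewa x y n) ^+ 2.
  apply: eq_big_nat => n /andP[jn nN]; rewrite pred_move_epoch_ewa.
  by rewrite (@epoch_of_eq _ ell_gt0 j n) // jn (leq_trans nN).
exact: (@ewa_regret _ _ p y (fun s i => clip_itv _) y_itv _ _ i jN).
Qed.

End EpochStrategy.

Lemma sum_pow2_epochs_powR (R : realType) (m : nat) (th : R) :
  0 < th -> 1 <= m%:R * th <= 2 ->
  forall J N, (epoch_start (fun j => 2 ^ (m * j))%N J < N)%N ->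
  \sum_(j < J.+1) ((2 ^ (m * j))%N%:R) `^ th <= 8 * N%:R `^ th.
Proof.
move=> th_gt0 mth J N JN.
have a_scale j : 2 * ((2 ^ (m * j))%N%:R : R) `^ th <= ((2 ^ (m * j.+1))%N%:R : R) `^ th
    <= 4 * ((2 ^ (m * j))%N%:R : R) `^ th.
  by rewrite mulnS expnD natrM (natrX _ 2 m); apply: powR_scale_pow2.
apply: le_trans (sum_doubling_le (fun j => powR_ge0 _ _) (fun j => proj1 (andP (a_scale j))) J) _.
have powR_le (u : nat) : (u <= N)%N -> (u%:R : R) `^ th <= N%:R `^ th.
  by move=> uN; apply: ge0_ler_powR; rewrite ?nnegrE ?ler0n ?ler_nat ?ltW.
suff : ((2 ^ (m * J))%N%:R : R) `^ th <= 4 * N%:R `^ th by lra.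
case: J JN => [|J] JN.
  rewrite muln0 expn0; apply: le_trans (powR_le 1%N (leq_ltn_trans (leq0n _) JN)) _.
  by apply: ler_peMl; [exact: powR_ge0 | lra].
apply: le_trans (proj2 (andP (a_scale J))) _; rewrite ler_pM2l ?powR_le //.
by rewrite (leq_trans _ (ltnW JN)) // epoch_startS leq_addl.
Qed.

Section NetPredictor.
Context {R : realType} {X : topologicalType}.
Variables (F : set (X -> R)) (gamma L d : R) (m : nat).
Hypotheses (gamma_gt0 : 0 < gamma) (L_gt0 : 0 < L).
Hypothesis net_exists : forall e, 0 < e -> exists n, has_net F e n.
Hypothesis entropy_lt : forall e, 0 < e < d -> metric_entropy F e * e `^ gamma < 2 * L.
Hypothesis d_gt0 : 0 < d.
Hypothesis m_scale : 1 <= m%:R * (gamma / (gamma + 1)) <= 2.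

Definition net_ell (j : nat) : nat := (2 ^ (m * j))%N.

Lemma net_ell_gt0 j : (0 < net_ell j)%N.
Proof. by rewrite expn_gt0. Qed.

Lemma net_ell_ge j : (j <= net_ell j)%N.
Proof.
have m_gt0 : (0 < m)%N by case: m m_scale => // /andP[]; rewrite mul0r ler10.
apply: leq_trans (ltnW (ltn_expl j (ltnSn 1))) _.
by rewrite leq_pexp2l // leq_pmull.
Qed.

Definition net_scale (j : nat) : R := (L / (net_ell j)%:R) `^ (1 / (gamma + 1)).

Lemma net_scale_gt0 j : 0 < net_scale j.
Proof. by rewrite powR_gt0 // divr_gt0 // ltr0n net_ell_gt0. Qed.

Definition net_size (j : nat) : nat := net_number F (net_scale j).

Definition net_point (j : nat) : 'I_(net_size j) -> X -> R :=
  proj1_sig (cid (net_number_spec (net_exists (net_scale_gt0 j)))).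
Arguments net_point : clear implicits.

Lemma net_pointP j f : F f -> exists i, sup_close (net_scale j) f (net_point j i).
Proof. rewrite /net_point; case: cid => g /= [_ gnet]; exact: gnet. Qed.

Definition net_predictor : strategy R X := epoch_ewa net_ell_gt0 net_point.

Local Notation T := (epoch_start net_ell).
Local Notation w j := (L `^ (1 / (gamma + 1)) * (net_ell j)%:R `^ (gamma / (gamma + 1))).

Lemma net_predictor_epoch_regret f j N x y : F f -> (forall n, -1 <= y n <= 1) ->
  net_scale j < d -> net_scale j <= 1 -> (T j <= N <= T j.+1)%N ->
  \sum_(T j <= n < N) ((y n - pred_move net_predictor x y n) ^+ 2 - (y n - f (x n)) ^+ 2)
  <= 69 * w j.
Proof.
move=> Ff y_itv eps_lt_d eps_le1 /[dup] jN /andP[_ Nj].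
have [i fi] := net_pointP j Ff.
have l_gt0 : 0 < (net_ell j)%:R :> R by rewrite ltr0n net_ell_gt0.
have approx : \sum_(T j <= n < N) (y n - clip (net_point j i (x n))) ^+ 2 <=
    \sum_(T j <= n < N) (y n - f (x n)) ^+ 2 + 5 * (net_scale j * (net_ell j)%:R).
  apply: le_trans (_ : \sum_(T j <= n < N) ((y n - f (x n)) ^+ 2 + 5 * net_scale j) <= _).
    by apply: ler_sum => n _; exact: sqloss_clip_le.
  rewrite big_split /= sumr_const_nat lerD2l -[_ *+ (N - _)]mulr_natr -mulrA ler_pM2l //.
  rewrite ler_pM2l ?net_scale_gt0 // ler_nat leq_subLR -epoch_startS //.
have lnK_lt : ln (net_size j)%:R < 2 * w j.
  have eps_g_gt0 : 0 < net_scale j `^ gamma by rewrite powR_gt0 ?net_scale_gt0.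
  rewrite -(ltr_pM2r eps_g_gt0) -mulrA [w j * _]mulrC net_scale_powR //.
  have eps_itv : 0 < net_scale j < d by rewrite net_scale_gt0.
  by apply: le_lt_trans (entropy_lt eps_itv); rewrite ler_pM2r // ln_net_number_le.
have := epoch_ewa_regret net_ell_gt0 net_point x i y_itv jN.
rewrite -/net_predictor sumrB net_scale_mul // in approx *; lra.
Qed.

Lemma net_predictor_late_regret f j0 N x y : F f -> (forall n, -1 <= y n <= 1) ->
  (forall j, (j0 <= j)%N -> net_scale j < Num.min d 1) -> (T j0 < N)%N ->
  \sum_(T j0 <= n < N) ((y n - pred_move net_predictor x y n) ^+ 2 - (y n - f (x n)) ^+ 2)
  <= 552 * (L `^ (1 / (gamma + 1)) * N%:R `^ (gamma / (gamma + 1))).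
Proof.
move=> Ff y_itv eps_small j0N; set J := epoch_of net_ell_gt0 N.-1.
have /andP[JN NJ] := epoch_ofP net_ell_gt0 N.-1.
have N_gt0 : (0 < N)%N by apply: leq_ltn_trans j0N.
have {}JN : (T J < N)%N by rewrite -(prednK N_gt0) ltnS.
rewrite prednK // in NJ.
apply: le_trans (_ : \sum_(j < J.+1) 69 * w j <= _).
  apply: (@sum_over_epochs _ _ _ (fun j => 69 * w j)) => [j|j M j0j jM||];
    rewrite ?(ltnW j0N) ?(ltnW JN) //.
  - by rewrite mulr_ge0 ?mulr_ge0 ?powR_ge0.
  - have /andP[eps_d eps_1] : (net_scale j < d) && (net_scale j < 1).
      by rewrite -lt_min; apply: eps_small.
    exact: net_predictor_epoch_regret (ltW eps_1) jM.
under eq_bigr do rewrite mulrA; rewrite -mulr_sumr (_ : 552 = 69 * 8 :> R); last by lra.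
rewrite -!mulrA ler_pM2l // mulrCA ler_pM2l ?powR_gt0 //.
by apply: sum_pow2_epochs_powR JN; rewrite ?divr_gt0 ?addr_gt0.
Qed.

Lemma net_predictor_regret f : F f ->
  exists N0, forall N, (N0 <= N)%N ->
  forall (x : nat -> X) (y : nat -> R), (forall n, -1 <= y n <= 1) ->
  \sum_(n < N) (y n - pred_move net_predictor x y n) ^+ 2
  <= \sum_(n < N) (y n - f (x n)) ^+ 2
     + 553 * L `^ (1 / (gamma + 1)) * N%:R `^ (gamma / (gamma + 1)).
Proof.
move=> Ff; set ka := 1 / (gamma + 1); set th := gamma / (gamma + 1).
have [j0 eps_small] : exists j0, forall j, (j0 <= j)%N -> net_scale j < Num.min d 1.
  apply: powR_ratio_lt net_ell_ge; rewrite ?ltW ?divr_gt0 ?addr_gt0 //.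
  by rewrite lt_min d_gt0 ltr01.
have Lka_gt0 : 0 < L `^ ka by rewrite powR_gt0.
have th_gt0 : 0 < th by rewrite divr_gt0 ?addr_gt0.
have [N1 N1P] := powR_nat_unbounded (4 * (T j0)%:R / L `^ ka) th_gt0.
exists (maxn (T j0) N1).+1 => N; rewrite gtn_max => /andP[j0N N1N] x y y_itv.
have early : \sum_(0 <= n < T j0)
    ((y n - pred_move net_predictor x y n) ^+ 2 - (y n - f (x n)) ^+ 2) <= 4 * (T j0)%:R.
  rewrite mulr_natr -[in leRHS](subn0 (T j0)) -sumr_const_nat; apply: ler_sum => n _.
  exact/sqloss_sub_le4/pred_move_epoch_ewa_itv.
have early_small : 4 * (T j0)%:R <= L `^ ka * N%:R `^ th.
  by rewrite -ler_pdivrMl // mulrC; apply: N1P; rewrite ltnW.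
have late := net_predictor_late_regret x Ff y_itv eps_small j0N.
suff : \sum_(0 <= n < N)
    ((y n - pred_move net_predictor x y n) ^+ 2 - (y n - f (x n)) ^+ 2)
    <= 553 * (L `^ ka * N%:R `^ th) by rewrite big_mkord sumrB; lra.
by rewrite (@big_cat_nat _ _ _ (T j0)) ?(ltnW j0N) //=; lra.
Qed.

End NetPredictor.

Theorem corollary7 (R : realType) :
  exists C : R,
  forall (X : topologicalType) (F : set (X -> R)) (gamma L : R),
    [set: X] !=set0 ->
    (forall f, F f -> bounded_continuous f) ->
    @compact {uniform X -> R} F ->
    0 < gamma ->
    limsup0 (fun e => metric_entropy F e * e `^ gamma) = L%:E ->
    0 < L ->
    exists S : strategy R X,
    forall f, F f ->
    exists N0 : nat, forall N : nat, (N0 <= N)%N ->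
    forall (x : nat -> X) (y : nat -> R), (forall n, -1 <= y n <= 1) ->
      \sum_(n < N) (y n - pred_move S x y n) ^+ 2
      <= \sum_(n < N) (y n - f (x n)) ^+ 2
         + C * L `^ (1 / (gamma + 1)) * N%:R `^ (gamma / (gamma + 1)).
Proof.
exists 553 => X F gamma L _ _ _ gamma_gt0 FL L_gt0.
have nets := has_net_of_limsup0_gt0 FL L_gt0.
have [d d_gt0 entropy_lt] : exists2 d, 0 < d &
    forall e, 0 < e < d -> metric_entropy F e * e `^ gamma < 2 * L.
  by apply: limsup0_lt; rewrite FL lte_fin; lra.
have [m m_scale] : exists m : nat, 1 <= m%:R * (gamma / (gamma + 1)) <= 2.
  apply: exists_nat_mul_itv.
  by rewrite divr_gt0 ?addr_gt0 //= ler_pdivrMr ?addr_gt0 // mul1r lerDl.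
exists (net_predictor gamma m L_gt0 nets) => f.
exact: (net_predictor_regret gamma_gt0 L_gt0 nets entropy_lt d_gt0 m_scale (f := f)).
Qed.
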